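(* Let $(V,P)$ be a finite, connected, lazy, reversible Markov chain equipped with the combinatorial distance $d$, and let $x\sim y$. The following are equivalent: (i) the edge $(x,y)$ has non-negative Ollivier sectional curvature; (ii) for all $f$ with $|f(u)-f(v)|\le d(u,v)$ for all $u,v$ and $f(y)-f(x)=1$, and all $\lambda\ge0$, \[ \frac{\Delta e^{\lambda f}(x)}{e^{\lambda f(x)}}\ge\frac{\Delta e^{\lambda f}(y)}{e^{\lambda f(y)}}\quad\text{and}\quad \frac{\Delta e^{-\lambda f}(x)}{e^{-\lambda f(x)}}\le\frac{\Delta e^{-\lambda f}(y)}{e^{-\lambda f(y)}}. \]
   Context: Lazy means $\sum_yP(x,y)=1$ and $P(x,x)\ge\frac12$ for all $x$; $P$ has symmetric support, and there is a probability $m$ with $m(x)P(x,y)=m(y)P(y,x)$. $x\sim y$ means $x\ne y$ and $P(x,y)>0$; the combinatorial distance is the minimal number of edges on a path. $\Delta f(x)=\sum_zP(x,z)(f(z)-f(x))$. The edge $x\sim y$ has non-negative Ollivier sectional curvature if there is a coupling $\pi:V\times V\to[0,\infty)$ of $P(x,\cdot)$ and $P(y,\cdot)$ (i.e. $\sum_{y'}\pi(x',y')=P(x,x')$, $\sum_{x'}\pi(x',y')=P(y,y')$) with $d(x',y')\le1$ whenever $\pi(x',y')>0$. *)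

From HB Require Import structures.
From mathcomp Require Import all_boot all_order all_algebra.
From mathcomp Require Import all_classical all_reals.
From mathcomp Require Import sequences exp.
Set Implicit Arguments. Unset Strict Implicit. Unset Printing Implicit Defensive.
Import Order.TTheory GRing.Theory Num.Theory.
Local Open Scope ring_scope.

Section MarkovDefs.
Variables (R : realType) (V : finType) (P : V -> V -> R).

Definition lazy_chain : Prop :=
  (forall x y, 0 <= P x y) /\
  (forall x, \sum_(y : V) P x y = 1) /\
  (forall x, 1 / 2 <= P x x).

Definition sym_support : Prop := forall x y, (0 < P x y) <-> (0 < P y x).

Definition reversible : Prop :=
  exists m : V -> R,
    (forall x, 0 <= m x) /\ (\sum_(x : V) m x = 1) /\
    (forall x y, m x * P x y = m y * P y x).

Definition adj (x y : V) : bool := (x != y) && (0 < P x y).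

Fixpoint walkb (n : nat) (x y : V) : bool :=
  match n with
  | 0 => x == y
  | k.+1 => [exists z, adj x z && walkb k z y]
  end.

Definition connected_chain : Prop := forall x y, exists n, walkb n x y.

(* In a connected graph on #|V| vertices such an n exists and is < #|V|,
   so searching n in [0, #|V|) yields the true graph distance. *)
Definition dist (x y : V) : nat := find (fun n => walkb n x y) (iota 0 #|V|).

Definition Lap (f : V -> R) (x : V) : R := \sum_(z : V) P x z * (f z - f x).

Definition nonneg_sectional_curv (x y : V) : Prop :=
  exists pi : V -> V -> R,
    (forall x' y', 0 <= pi x' y') /\
    (forall x', \sum_(y' : V) pi x' y' = P x x') /\
    (forall y', \sum_(x' : V) pi x' y' = P y y') /\
    (forall x' y', 0 < pi x' y' -> (dist x' y' <= 1)%N).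

End MarkovDefs.

From HB Require Import structures.
From mathcomp Require Import all_boot all_order all_algebra.
From mathcomp Require Import all_classical all_reals.
From mathcomp Require Import sequences exp.
From mathcomp Require Import lra.
Import Order.TTheory GRing.Theory Num.Theory.
Local Open Scope ring_scope.
Set Implicit Arguments. Unset Strict Implicit. Unset Printing Implicit Defensive.

(* (i) => (ii): a coupling of P(x,.) and P(y,.) supported on pairs at distance at
   most 1 moves no mass by more than f(y) - f(x) = 1 in the direction of f, so it
   compares the two exponential averages termwise.
   (ii) => (i): by the supply-demand form of Hall's theorem, such a coupling exists iff
   P(x,B) <= P(y,N(B)) for every set B, where N(B) is the 1-neighbourhood of B.  When B
   is far from y, testing (ii) on f = -min(2, d(B,.)) and letting lam -> oo gives this
   inequality; when x is in B, the same argument applied to the complement of N(B) gives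
   it; otherwise laziness does, as P(x,B) <= 1/2 <= P(y,y). *)

Section FiniteSums.
Variables (R : numDomainType) (T : finType).
Implicit Types (A B : {set T}) (F : T -> R).

Lemma sum_le_subset A B F : A \subset B -> (forall i, 0 <= F i) ->
  \sum_(i in A) F i <= \sum_(i in B) F i.
Proof.
move=> AB F0; rewrite [X in _ <= X](big_setID A) /= (finset.setIidPr AB).
by rewrite lerDl sumr_ge0.
Qed.

Lemma le_sum_mem B k F : k \in B -> (forall i, 0 <= F i) ->
  F k <= \sum_(i in B) F i.
Proof.
move=> kB F0; have := sum_le_subset (_ : [set k] \subset B) F0.
by rewrite big_set1 finset.sub1set; apply.
Qed.

Lemma sum_setC A F : \sum_(i in ~: A) F i = \sum_i F i - \sum_(i in A) F i.
Proof.
rewrite [\sum_i F i](bigID (mem A)) /= addrC addrK.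
by apply: eq_bigl => i; rewrite inE.
Qed.

Lemma coupling_sum_le (pi : T -> T -> R) (a b G H : T -> R) :
  (forall i j, 0 <= pi i j) -> (forall i, \sum_j pi i j = a i) ->
  (forall j, \sum_i pi i j = b j) -> (forall i j, pi i j != 0 -> H j <= G i) ->
  \sum_j b j * H j <= \sum_i a i * G i.
Proof.
move=> pi0 rows cols HG.
under eq_bigr do rewrite -cols mulr_suml.
under [X in _ <= X]eq_bigr do rewrite -rows mulr_suml.
rewrite exchange_big /=; apply: ler_sum => i _; apply: ler_sum => j _.
have [->|pij] := eqVneq (pi i j) 0; first by rewrite !mul0r.
exact: ler_wpM2l (HG i j pij).
Qed.

Definition pmass (k : T) (t : R) : T -> R := fun i => if i == k then t else 0.

Lemma sum_pmass B k t : \sum_(i in B) pmass k t i = if k \in B then t else 0.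
Proof.
rewrite -big_mkcondr; case: ifP => kB.
  rewrite (eq_bigl (pred1 k)) ?big_pred1_eq // => i /=.
  by case: eqP => [->|]; rewrite ?kB ?andbF.
by rewrite big_pred0 // => i /=; apply/andP => -[iB /eqP ik]; rewrite -ik iB in kB.
Qed.

Lemma sumT_pmass k t : \sum_i pmass k t i = t.
Proof. by rewrite -big_mkcond big_pred1_eq. Qed.

Definition restr A F : T -> R := fun i => if i \in A then F i else 0.

Lemma sum_restr A B F : \sum_(i in B) restr A F i = \sum_(i in B :&: A) F i.
Proof. by rewrite -big_mkcondr; apply: eq_bigl => i; rewrite inE. Qed.

Lemma restr_setC A F i : restr A F i + restr (~: A) F i = F i.
Proof. by rewrite /restr inE; case: (i \in A); rewrite ?addr0 ?add0r. Qed.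

Lemma restr_ge0 A F : (forall i, 0 <= F i) -> forall i, 0 <= restr A F i.
Proof. by move=> F0 i; rewrite /restr; case: ifP. Qed.

End FiniteSums.

Section FractionalHall.
Variables (R : realFieldType) (T : finType) (E : rel T).
Implicit Types (mu nu : T -> R) (A B : {set T}).

Definition neighbours B : {set T} := [set j | [exists i in B, E i j]].

Definition subcoupling (pi : T -> T -> R) mu nu :=
  [/\ forall i j, 0 <= pi i j, forall i, \sum_j pi i j = mu i,
      forall j, \sum_i pi i j <= nu j & forall i j, pi i j != 0 -> E i j].

Definition hall_condition mu nu :=
  forall B, \sum_(i in B) mu i <= \sum_(j in neighbours B) nu j.

Definition supp mu : {set T} := [set i | mu i != 0].

Lemma neighbours0 : neighbours finset.set0 = finset.set0.
Proof. by apply/setP => j; rewrite !inE; apply/exists_inP => -[i]; rewrite inE. Qed.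

Lemma neighboursU A B : neighbours (A :|: B) = neighbours A :|: neighbours B.
Proof.
apply/setP => j; rewrite !inE; apply/exists_inP/orP => [[i]|].
  by rewrite inE => /orP[] iAB Eij; [left | right]; apply/exists_inP; exists i.
by case=> /exists_inP[i iAB Eij]; exists i; rewrite // inE iAB ?orbT.
Qed.

Lemma neighboursS A B : A \subset B -> neighbours A \subset neighbours B.
Proof.
move=> AB; apply/fintype.subsetP => j; rewrite !inE => /exists_inP[i iA Eij].
by apply/exists_inP; exists i; rewrite ?(fintype.subsetP AB).
Qed.

Lemma subcoupling0 mu nu : (forall i, mu i = 0) -> (forall j, 0 <= nu j) ->
  subcoupling (fun _ _ => 0) mu nu.
Proof. by move=> mu0 nu0; split=> // [i|j|i j]; rewrite ?big1 ?mu0 ?eqxx. Qed.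

Lemma subcoupling_point i0 j0 t : 0 <= t -> E i0 j0 ->
  subcoupling (fun i j => if i == i0 then pmass j0 t j else 0)
              (pmass i0 t) (pmass j0 t).
Proof.
move=> t0 Eij; split=> [i j|i|j|i j].
- by rewrite /pmass; case: (i == i0); case: (j == j0).
- by rewrite /pmass; case: ifP => _; rewrite ?sumT_pmass ?big1.
- by rewrite -big_mkcond big_pred1_eq.
- rewrite /pmass; have [->|_] := eqVneq i i0; last by rewrite eqxx.
  by have [->|_] := eqVneq j j0; rewrite ?eqxx.
Qed.

Lemma subcoupling_add pi1 pi2 mu1 mu2 nu1 nu2 mu nu :
  subcoupling pi1 mu1 nu1 -> subcoupling pi2 mu2 nu2 ->
  (forall i, mu1 i + mu2 i = mu i) -> (forall j, nu1 j + nu2 j <= nu j) ->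
  subcoupling (fun i j => pi1 i j + pi2 i j) mu nu.
Proof.
case=> pi1_ge0 rows1 cols1 E1 [pi2_ge0 rows2 cols2 E2] mu12 nu12.
split=> [i j|i|j|i j].
- exact: addr_ge0.
- by rewrite big_split /= rows1 rows2.
- by rewrite big_split /=; apply: le_trans (lerD (cols1 j) (cols2 j)) (nu12 j).
- by have [pi1_0|/E1//] := eqVneq (pi1 i j) 0; rewrite pi1_0 add0r => /E2.
Qed.

Lemma hall_condition_peel mu nu i0 j0 t :
  hall_condition mu nu -> E i0 j0 ->
  (forall B, i0 \notin B -> j0 \in neighbours B ->
     t <= \sum_(j in neighbours B) nu j - \sum_(i in B) mu i) ->
  hall_condition (fun i => mu i - pmass i0 t i) (fun j => nu j - pmass j0 t j).
Proof.
move=> hall Eij slack B; rewrite !sumrB !sum_pmass; have := hall B.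
case: (boolP (i0 \in B)) => i0B.
  suff -> : j0 \in neighbours B by lra.
  by rewrite inE; apply/exists_inP; exists i0.
by case: ifP => j0N; [have := slack B i0B j0N; lra | lra].
Qed.

Lemma hall_condition_restr mu nu A : (forall j, 0 <= nu j) ->
  hall_condition mu nu -> hall_condition (restr A mu) (restr (neighbours A) nu).
Proof.
move=> nu0 hall B; rewrite !sum_restr; apply: le_trans (hall _) _.
by rewrite sum_le_subset // finset.subsetI !neighboursS ?finset.subsetIl ?finset.subsetIr.
Qed.

Lemma hall_condition_restrC mu nu A : hall_condition mu nu ->
  \sum_(i in A) mu i = \sum_(j in neighbours A) nu j ->
  hall_condition (restr (~: A) mu) (restr (~: neighbours A) nu).
Proof.
move=> hall tight B; rewrite !sum_restr -!finset.setDE.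
have := hall (B :|: A); rewrite neighboursU (big_setID A).
rewrite [X in _ <= X](big_setID (neighbours A)) /=.
rewrite !(finset.setIidPr (finset.subsetUr _ _)).
by rewrite !finset.setDUl !finset.setDv !finset.setU0 tight; lra.
Qed.

Lemma supp_restr A mu : supp (restr A mu) \subset supp mu.
Proof. by apply/fintype.subsetP => i; rewrite !inE /restr; case: ifP; rewrite ?eqxx. Qed.

Lemma supp_peel mu k t : mu k != 0 ->
  supp (fun i => mu i - pmass k t i) \subset supp mu.
Proof.
move=> muk; apply/fintype.subsetP => i; rewrite !inE /pmass.
by have [->|_] := eqVneq i k; rewrite ?subr0.
Qed.

Lemma peel_ge0 mu k t : (forall i, 0 <= mu i) -> t <= mu k ->
  forall i, 0 <= mu i - pmass k t i.
Proof.
by move=> mu0 tk i; rewrite /pmass; have [->|_] := eqVneq i k; rewrite ?subr0 ?subr_ge0.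
Qed.

Lemma supp_card_lt mu nu mu' nu' k :
  supp mu' \subset supp mu -> supp nu' \subset supp nu -> mu k != 0 -> mu' k = 0 ->
  (#|supp mu'| + #|supp nu'| < #|supp mu| + #|supp nu|)%N.
Proof.
move=> smu snu muk mu'k; rewrite -addSn leq_add ?subset_leq_card // proper_card //.
by apply/properP; split=> //; exists k; rewrite !inE ?muk ?mu'k ?eqxx.
Qed.

Lemma hall_edge mu nu i0 : hall_condition mu nu -> 0 < mu i0 ->
  exists2 j0, E i0 j0 & nu j0 != 0.
Proof.
move=> hall mui0; case: (pickP (fun j => E i0 j && (nu j != 0))) => [j /andP[]|nu_eq0].
  by exists j.
have := hall [set i0]; rewrite big_set1 big1 => [|j]; first by rewrite leNgt mui0.
rewrite inE => /exists_inP[i]; rewrite inE => /eqP-> Ei0j.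
by have := nu_eq0 j; rewrite Ei0j => /negbFE/eqP.
Qed.

(* The largest mass that can be sent along the edge (i0, j0) while keeping
   Hall's condition; if it exhausts neither endpoint, some set becomes tight. *)
Lemma peel_amount mu nu i0 j0 :
  (forall i, 0 <= mu i) -> (forall j, 0 <= nu j) -> hall_condition mu nu ->
  exists t, [/\ 0 <= t, t <= mu i0, t <= nu j0,
    forall B, i0 \notin B -> j0 \in neighbours B ->
      t <= \sum_(j in neighbours B) nu j - \sum_(i in B) mu i &
    [\/ t = mu i0, t = nu j0 |
        exists2 A : {set T}, (i0 \notin A) && (j0 \in neighbours A) &
          t = \sum_(j in neighbours A) nu j - \sum_(i in A) mu i]].
Proof.
move=> mu0 nu0 hall.
pose g (A : {set T}) := \sum_(j in j0 |: neighbours A) nu j - \sum_(i in A) mu i.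
have gE A : j0 \in neighbours A ->
    g A = \sum_(j in neighbours A) nu j - \sum_(i in A) mu i.
  by move=> j0A; rewrite /g (finset.setUidPr _) // finset.sub1set.
have g0 : g finset.set0 = nu j0.
  by rewrite /g neighbours0 finset.setU0 big_set1 big_set0 subr0.
have [A0 i0A0 A0min] : exists2 A0 : {set T},
    i0 \notin A0 & forall B, i0 \notin B -> g A0 <= g B.
  have i0_set0 : i0 \notin finset.set0 by rewrite inE.
  by case: (arg_minP g (P := fun A => i0 \notin A) i0_set0) => A0 i0A0 A0min; exists A0.
have gA0_ge0 : 0 <= g A0.
  rewrite subr_ge0; apply: le_trans (hall A0) (sum_le_subset _ _) => //.
  exact: finset.subsetUr.
have gA0_le : g A0 <= nu j0 by rewrite -g0 A0min ?inE.
exists (Num.min (mu i0) (g A0)); split.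
- by rewrite le_min mu0 gA0_ge0.
- by rewrite ge_min lexx.
- by rewrite ge_min gA0_le orbT.
- by move=> B i0B j0B; rewrite ge_min -gE ?A0min ?orbT.
rewrite minEle; case: ifP => _; first exact: Or31.
have [j0A0|j0A0] := boolP (j0 \in neighbours A0).
  by apply: Or33; exists A0; rewrite ?i0A0 ?gE.
apply: Or32; apply/eqP; rewrite eq_le gA0_le /g big_setU1 //=.
by rewrite -addrA lerDl subr_ge0 hall.
Qed.

Section HallInduction.
Variable n : nat.
Hypothesis IH : forall mu nu, (#|supp mu| + #|supp nu| < n)%N ->
  (forall i, 0 <= mu i) -> (forall j, 0 <= nu j) -> hall_condition mu nu ->
  exists pi, subcoupling pi mu nu.

Lemma subcoupling_tight_split mu nu A :
  (#|supp mu| + #|supp nu| <= n)%N ->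
  (forall i, 0 <= mu i) -> (forall j, 0 <= nu j) -> hall_condition mu nu ->
  \sum_(i in A) mu i = \sum_(j in neighbours A) nu j ->
  (exists2 j, j \in neighbours A & nu j != 0) -> (exists2 i, i \notin A & mu i != 0) ->
  exists pi, subcoupling pi mu nu.
Proof.
move=> size_le mu0 nu0 hall tight [j jA nuj] [i2 i2A mui2].
have [i1 i1A mui1] : exists2 i1, i1 \in A & mu i1 != 0.
  apply/exists_inP; apply: contraTT nuj => /exists_inPn mu_eq0.
  have sum0 : \sum_(j in neighbours A) nu j = 0.
    by rewrite -tight big1 // => i /mu_eq0 /negPn /eqP.
  by rewrite (psumr_eq0P (fun j _ => nu0 j) sum0 jA) eqxx.
have [pi1 sub1] : exists pi1, subcoupling pi1 (restr A mu) (restr (neighbours A) nu).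
  apply: IH; [|exact: restr_ge0|exact: restr_ge0|exact: hall_condition_restr].
  apply: leq_trans (size_le).
  by apply: (supp_card_lt (k := i2)); rewrite ?supp_restr // /restr (negbTE i2A).
have [pi2 sub2] : exists pi2,
    subcoupling pi2 (restr (~: A) mu) (restr (~: neighbours A) nu).
  apply: IH; [|exact: restr_ge0|exact: restr_ge0|exact: hall_condition_restrC].
  apply: leq_trans (size_le).
  by apply: (supp_card_lt (k := i1)); rewrite ?supp_restr // /restr inE i1A.
by exists (fun i j => pi1 i j + pi2 i j); apply: subcoupling_add sub1 sub2 _ _ => *;
  rewrite restr_setC.
Qed.

Lemma subcoupling_step mu nu :
  (#|supp mu| + #|supp nu| <= n)%N ->
  (forall i, 0 <= mu i) -> (forall j, 0 <= nu j) -> hall_condition mu nu ->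
  exists pi, subcoupling pi mu nu.
Proof.
move=> size_le mu0 nu0 hall.
have [i0 mui0|mu_eq0] := pickP (fun i => mu i != 0); last first.
  by exists (fun _ _ => 0); apply: subcoupling0 => // i; apply/eqP/negbFE/mu_eq0.
have [j0 Eij nuj0] : exists2 j0, E i0 j0 & nu j0 != 0.
  by apply: hall_edge hall _; rewrite lt0r mui0 mu0.
have [t [t0 t_mu t_nu t_slack t_cases]] := peel_amount i0 j0 mu0 nu0 hall.
pose mu' i := mu i - pmass i0 t i; pose nu' j := nu j - pmass j0 t j.
have mu'0 := peel_ge0 mu0 t_mu; have nu'0 := peel_ge0 nu0 t_nu.
have supp_mu' := supp_peel t mui0; have supp_nu' := supp_peel t nuj0.
have hall' := hall_condition_peel hall Eij t_slack.
have [pi' sub'] : exists pi', subcoupling pi' mu' nu'.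
  have [t_eq|t_ne_mu] := eqVneq t (mu i0).
    apply: IH => //; apply: leq_trans (size_le).
    by apply: (supp_card_lt (k := i0)) => //; rewrite /mu' /pmass eqxx t_eq subrr.
  have [t_eq|t_ne_nu] := eqVneq t (nu j0).
    apply: IH => //; apply: leq_trans (size_le); rewrite addnC [X in (_ < X)%N]addnC.
    by apply: (supp_card_lt (k := j0)) => //; rewrite /nu' /pmass eqxx t_eq subrr.
  case: t_cases => [/eqP|/eqP|[A /andP[i0A j0A] t_eq]];
    rewrite ?(negbTE t_ne_mu) ?(negbTE t_ne_nu) //.
  apply: (subcoupling_tight_split (A := A)) => //.
  - by apply: leq_trans (size_le); rewrite leq_add ?subset_leq_card.
  - by rewrite /mu' /nu' !sumrB !sum_pmass (negbTE i0A) j0A t_eq; lra.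
  - by exists j0; rewrite // /nu' /pmass eqxx subr_eq0 eq_sym.
  - by exists i0; rewrite // /mu' /pmass eqxx subr_eq0 eq_sym.
exists (fun i j => pi' i j + (if i == i0 then pmass j0 t j else 0)).
by apply: subcoupling_add sub' (subcoupling_point t0 Eij) _ _ => *; rewrite subrK.
Qed.

End HallInduction.

Theorem fractional_hall mu nu :
  (forall i, 0 <= mu i) -> (forall j, 0 <= nu j) -> hall_condition mu nu ->
  exists pi, subcoupling pi mu nu.
Proof.
move: {2}(_ + _)%N (leqnn (#|supp mu| + #|supp nu|)) => n.
elim: n mu nu => [|n IH] mu nu size_le; apply: subcoupling_step size_le => mu' nu'.
  by rewrite ltn0.
by rewrite ltnS; apply: IH.
Qed.

Lemma subcoupling_colsum pi mu nu : subcoupling pi mu nu ->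
  \sum_i mu i = \sum_j nu j -> forall j, \sum_i pi i j = nu j.
Proof.
case=> pi0 rows cols _ mass j.
have gap0 : \sum_j (nu j - \sum_i pi i j) = 0.
  by rewrite sumrB exchange_big /= (eq_bigr mu (fun i _ => rows i)) mass subrr.
have gap_ge0 k : true -> 0 <= nu k - \sum_i pi i k by rewrite subr_ge0.
by apply/eqP; rewrite eq_sym -subr_eq0 (psumr_eq0P gap_ge0 gap0).
Qed.

End FractionalHall.

Section Distance.
Variables (R : realType) (V : finType) (P : V -> V -> R).
Hypothesis Psym : sym_support P.

Lemma dist_le_walk k u v : walkb P k u v -> (dist P u v <= k)%N.
Proof.
move=> walk_k; have [k_lt|k_ge] := ltnP k #|V|.
  rewrite leqNgt; apply/negP => /(before_find 0).
  by rewrite nth_iota // add0n walk_k.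
by apply: leq_trans (find_size _ _) _; rewrite size_iota.
Qed.

Lemma dist_walk u v : (dist P u v < #|V|)%N -> walkb P (dist P u v) u v.
Proof.
move=> lt_card; have has_walk : has (walkb P ^~ u ^~ v) (iota 0 #|V|).
  by rewrite has_find size_iota.
by have := nth_find 0 has_walk; rewrite nth_iota ?add0n.
Qed.

Lemma walk_cat m n u v w : walkb P m u v -> walkb P n v w -> walkb P (m + n) u w.
Proof.
elim: m u => [|m IH] u /=; first by move=> /eqP ->.
case/existsP => z /andP[uz zv] vw; apply/existsP; exists z.
by rewrite uz IH.
Qed.

Lemma adj_sym u v : adj P u v -> adj P v u.
Proof. by case/andP => uv Puv; rewrite /adj eq_sym uv; apply/Psym. Qed.

Lemma walk_sym n u v : walkb P n u v -> walkb P n v u.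
Proof.
elim: n u => [|n IH] u; first by rewrite /= eq_sym.
case/existsP => z /andP[uz zv]; rewrite -addn1; apply: walk_cat (IH _ zv) _.
by apply/existsP; exists u; rewrite adj_sym /=.
Qed.

Lemma dist_sym u v : dist P u v = dist P v u.
Proof.
suff le_dist a b : (dist P b a <= dist P a b)%N by apply/eqP; rewrite eqn_leq !le_dist.
have [lt_card|ge_card] := ltnP (dist P a b) #|V|.
  exact/dist_le_walk/walk_sym/dist_walk.
by apply: leq_trans ge_card; apply: leq_trans (find_size _ _) _; rewrite size_iota.
Qed.

Lemma dist_refl u : dist P u u = 0%N.
Proof. by apply/eqP; rewrite -leqn0 (@dist_le_walk 0) /=. Qed.

Lemma dist_gt0 u v : u != v -> (0 < dist P u v)%N.
Proof.
move=> uv; rewrite lt0n; apply: contra uv => /eqP dist0.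
have /dist_walk : (dist P u v < #|V|)%N by rewrite dist0; apply/card_gt0P; exists u.
by rewrite dist0.
Qed.

Lemma dist_le1 u v : 0 < P u v -> (dist P u v <= 1)%N.
Proof.
move=> Puv; have [->|uv] := eqVneq u v; first by rewrite dist_refl.
by apply: (@dist_le_walk 1); apply/existsP; exists v; rewrite /adj uv Puv /=.
Qed.

End Distance.

Lemma le_of_exp_bound (R : realType) (S T : R) :
  (forall lam, 0 <= lam -> S * expR lam <= T * expR lam + 1) -> S <= T.
Proof.
move=> bound; rewrite leNgt; apply/negP => /[dup] TS; rewrite -subr_gt0 => gap0.
have := bound (S - T)^-1; rewrite invr_ge0 ltW // => /(_ isT).
have := ler_wpM2l (ltW gap0) (expR_ge1Dx (S - T)^-1).
by rewrite mulrDr mulr1 mulfV ?gt_eqF // mulrBl; lra.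
Qed.

Section ExpRatio.
Variables (R : realType) (V : finType) (P : V -> V -> R).
Hypotheses (P0 : forall u v, 0 <= P u v) (Psum : forall u, \sum_v P u v = 1)
  (Psym : sym_support P).
Implicit Types (A : {set V}) (f : V -> R).

Definition within1 (u v : V) : bool := (dist P u v <= 1)%N.

Local Notation N := (neighbours within1).

Definition dist_lipschitz (f : V -> R) :=
  forall u v, `|f u - f v| <= (dist P u v)%:R.

Definition lap_exp_ratio (f : V -> R) (lam : R) (u : V) :=
  Lap P (fun z => expR (lam * f z)) u / expR (lam * f u).

Definition exp_ratio_decreasing (x y : V) :=
  forall f, dist_lipschitz f -> f y - f x = 1 ->
  forall lam, 0 <= lam -> lap_exp_ratio f lam y <= lap_exp_ratio f lam x.

Lemma within1_sym u v : within1 u v = within1 v u.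
Proof. by rewrite /within1 dist_sym. Qed.

Lemma lap_exp_ratioE f lam u :
  lap_exp_ratio f lam u = \sum_z P u z * expR (lam * (f z - f u)) - 1.
Proof.
rewrite /lap_exp_ratio /Lap -(Psum u) mulr_suml -sumrB.
apply: eq_bigr => z _; rewrite (mulrBr lam) expRB -mulrA mulrBl mulfV ?mulrBr ?mulr1 //.
exact: lt0r_neq0 (expR_gt0 _).
Qed.

Lemma lap_exp_ratioN f lam u :
  lap_exp_ratio (fun z => - f z) lam u = lap_exp_ratio f (- lam) u.
Proof.
rewrite !lap_exp_ratioE; congr (_ - _); apply: eq_bigr => z _.
by rewrite -opprD mulrN mulNr.
Qed.

Lemma exp_ratio_conditionP x y :
  (forall f, dist_lipschitz f -> f y - f x = 1 -> forall lam, 0 <= lam ->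
     lap_exp_ratio f lam y <= lap_exp_ratio f lam x /\
     lap_exp_ratio f (- lam) x <= lap_exp_ratio f (- lam) y)
  <-> exp_ratio_decreasing x y /\ exp_ratio_decreasing y x.
Proof.
have lipN f : dist_lipschitz f -> dist_lipschitz (fun z => - f z).
  by move=> f_lip u v; rewrite -opprD normrN.
split=> [dec2 | [dec_xy dec_yx] f f_lip fxy lam lam0].
  split=> f f_lip f1 lam lam0; first exact: (dec2 f f_lip f1 lam lam0).1.
  rewrite -[lam]opprK -!(lap_exp_ratioN f).
  by apply: (dec2 _ (lipN f f_lip) _ lam lam0).2; lra.
split; first exact: dec_xy.
by rewrite -!(lap_exp_ratioN f); apply: dec_yx (lipN f f_lip) _ lam lam0; lra.
Qed.

Lemma nonneg_sectional_curv_sym x y :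
  nonneg_sectional_curv P x y -> nonneg_sectional_curv P y x.
Proof.
case=> pi [pi0 [rows [cols supp]]]; exists (fun u v => pi v u).
by do 3!split=> //; move=> u v /supp; rewrite dist_sym.
Qed.

Lemma curv_exp_ratio_decreasing x y :
  nonneg_sectional_curv P x y -> exp_ratio_decreasing x y.
Proof.
case=> pi [pi0 [rows [cols supp]]] f f_lip fxy lam lam0.
rewrite !lap_exp_ratioE lerD2r; apply: (coupling_sum_le pi0 rows cols) => i j pij.
rewrite ler_expR ler_wpM2l //.
have /supp dij : 0 < pi i j by rewrite lt0r pij pi0.
have := le_trans (f_lip i j) (_ : (dist P i j)%:R <= 1); rewrite lern1 ler_norml.
by move=> /(_ dij) /andP[]; lra.
Qed.

(* [test_fun A z = - min(2, d(A, z))] *)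
Definition test_fun (A : {set V}) (z : V) : R :=
  if z \in A then 0 else if z \in N A then -1 else -2.

Lemma test_fun_within1 A a b : within1 a b -> test_fun A a <= test_fun A b + 1.
Proof.
move=> ab; rewrite /test_fun; case: ifP => aA.
  have -> : b \in N A by rewrite inE; apply/exists_inP; exists a.
  by case: ifP => _; lra.
by do ![case: ifP => _]; lra.
Qed.

Lemma test_fun_lipschitz A : dist_lipschitz (test_fun A).
Proof.
move=> u v; have [->|uv] := eqVneq u v; first by rewrite subrr normr0.
have range z : -2 <= test_fun A z /\ test_fun A z <= 0.
  by rewrite /test_fun; do ![case: ifP => _]; split; lra.
have [[u_ge u_le] [v_ge v_le]] := (range u, range v).
rewrite ler_norml; case: (leqP (dist P u v) 1) => [uv1|uv2].
  have -> : dist P u v = 1%N by apply/eqP; rewrite eqn_leq uv1 dist_gt0.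
  have := test_fun_within1 A uv1.
  have := test_fun_within1 A (_ : within1 v u); rewrite within1_sym => /(_ uv1).
  by move=> *; apply/andP; split; lra.
have : 2 <= (dist P u v)%:R :> R by rewrite (ler_nat R 2).
by move=> *; apply/andP; split; lra.
Qed.

Lemma far_mass_le u w A : within1 u w -> (forall a, a \in A -> ~~ within1 u a) ->
  exp_ratio_decreasing u w -> \sum_(z in A) P w z <= \sum_(z in N A) P u z.
Proof.
move=> uw farA dec.
have [wN|wN] := boolP (w \in N A); last first.
  rewrite big1 ?sumr_ge0 // => a aA; apply/eqP; rewrite eq_le P0 andbT leNgt.
  apply: contra wN => Pwa; rewrite inE; apply/exists_inP; exists a => //.
  by rewrite within1_sym /within1 dist_le1.
have uA : u \notin A by apply/negP => /farA; rewrite /within1 dist_refl.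
have uN : u \notin N A.
  by rewrite inE; apply/exists_inPn => a /farA; rewrite within1_sym.
have test_w : test_fun A w = -1.
  by rewrite /test_fun wN; case: ifP => // /farA; rewrite uw.
have test_u : test_fun A u = -2 by rewrite /test_fun (negbTE uA) (negbTE uN).
apply: le_of_exp_bound => lam lam0.
have lower : (\sum_(z in A) P w z) * expR lam <=
    \sum_z P w z * expR (lam * (test_fun A z - test_fun A w)).
  rewrite mulr_suml big_mkcond /=; apply: ler_sum => z _; case: ifP => zA.
    by rewrite test_w {1}/test_fun zA sub0r opprK mulr1.
  by rewrite mulr_ge0 ?expR_ge0.
have upper : \sum_z P u z * expR (lam * (test_fun A z - test_fun A u)) <=
    (\sum_(z in N A) P u z) * expR lam + \sum_z P u z.
  rewrite mulr_suml [X in _ <= X + _]big_mkcond -big_split /=; apply: ler_sum => z _.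
  have [->|Puz] := eqVneq (P u z) 0; first by rewrite !mul0r if_same addr0.
  have zA : z \notin A by apply: contraL (farA z) _; apply: dist_le1; rewrite lt0r Puz P0.
  rewrite test_u {1}/test_fun (negbTE zA); case: ifP => _.
    by rewrite (_ : lam * (-1 - (-2)) = lam) ?lerDl //; lra.
  by rewrite (_ : lam * (-2 - (-2)) = 0) ?expR0 ?mulr1 ?add0r //; lra.
have test_step : test_fun A w - test_fun A u = 1 by rewrite test_w test_u; lra.
have := dec _ (test_fun_lipschitz A) test_step lam lam0.
rewrite !lap_exp_ratioE lerD2r => mid.
by rewrite -(Psum u); apply: le_trans lower (le_trans mid upper).
Qed.

Lemma hall_condition_exp_ratio x y : within1 x y ->
  1 / 2 <= P x x -> 1 / 2 <= P y y ->
  exp_ratio_decreasing x y -> exp_ratio_decreasing y x ->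
  hall_condition within1 (P x) (P y).
Proof.
move=> xy Pxx Pyy dec_xy dec_yx B.
have [yNB|yNB] := boolP (y \in N B); last first.
  apply: far_mass_le (_ : within1 y x) _ dec_yx; first by rewrite within1_sym.
  move=> b bB; apply: contra yNB => yb.
  by rewrite inE; apply/exists_inP; exists b; rewrite // within1_sym.
have [xB|xB] := boolP (x \in B); last first.
  have Bx : B \subset ~: [set x].
    by apply/fintype.subsetP => b bB; rewrite !inE; apply: contraNneq xB => <-.
  have := sum_le_subset Bx (P0 x); have := le_sum_mem yNB (P0 y).
  by rewrite sum_setC big_set1 Psum; lra.
pose C := ~: N B.
have farC c : c \in C -> ~~ within1 x c.
  by rewrite inE; apply: contra => xc; rewrite inE; apply/exists_inP; exists x.
have BC : B \subset ~: N C.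
  apply/fintype.subsetP => b bB; rewrite !inE; apply/exists_inPn => c.
  rewrite !inE => /exists_inPn cB; have := cB b bB; rewrite within1_sym.
  by move=> /negbTE ->.
have := far_mass_le xy farC dec_xy; have := sum_le_subset BC (P0 x).
by rewrite /C !sum_setC !Psum; lra.
Qed.

Lemma exp_ratio_curv x y : within1 x y -> 1 / 2 <= P x x -> 1 / 2 <= P y y ->
  exp_ratio_decreasing x y -> exp_ratio_decreasing y x ->
  nonneg_sectional_curv P x y.
Proof.
move=> xy Pxx Pyy dec_xy dec_yx.
have [pi sub] := fractional_hall (P0 x) (P0 y)
  (hall_condition_exp_ratio xy Pxx Pyy dec_xy dec_yx).
have cols := subcoupling_colsum sub (etrans (Psum x) (esym (Psum y))).
case: sub => pi0 rows _ suppE; exists pi; do 3!split=> //.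
by move=> u v /lt0r_neq0 /suppE.
Qed.

End ExpRatio.

Theorem theorem4p3 (R : realType) (V : finType) (P : V -> V -> R)
  (Hlazy : lazy_chain P) (Hsym : sym_support P) (Hrev : reversible P)
  (Hconn : connected_chain P) (x y : V) (Hxy : adj P x y) :
  nonneg_sectional_curv P x y <->
  (forall f : V -> R,
     (forall u v, `|f u - f v| <= ((dist P u v)%:R : R)) ->
     f y - f x = 1 ->
     forall lam : R, 0 <= lam ->
       Lap P (fun z => expR (lam * f z)) x / expR (lam * f x)
         >= Lap P (fun z => expR (lam * f z)) y / expR (lam * f y)
       /\
       Lap P (fun z => expR (- lam * f z)) x / expR (- lam * f x)
         <= Lap P (fun z => expR (- lam * f z)) y / expR (- lam * f y)).
Proof.
case: Hlazy => P0 [Psum Plazy].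
have xy : within1 P x y by apply: dist_le1; case/andP: Hxy.
apply: (iff_trans _ (iff_sym (exp_ratio_conditionP Psum x y))).
split=> [curv | [dec_xy dec_yx]].
  split; apply: curv_exp_ratio_decreasing => //.
  exact: nonneg_sectional_curv_sym.
exact: exp_ratio_curv.
Qed.
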